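(* Suppose that Assumptions (A1)–(A4) hold. Then there is a constant $C>0$ depending only on $\alpha$, $\gamma$, the constants in (A1) and (A2), and $\|V\|_{C^2}$ (independent of $\epsilon\in(0,1]$) such that for every solution $(u,m)$ of Problem 1, each of the functions $u$, $u_x$, $m$, $m_x$ has $L^\infty(\mathbb{T})$-norm at most $C/\sqrt{\epsilon}$ and satisfies $|w(x)-w(y)|\le \frac{C}{\sqrt\epsilon}|x-y|^{1/2}$ for all $x,y\in\mathbb{T}$ (where $|x-y|$ is the distance on $\mathbb{T}$). The same holds, with the same constant, if $V$ is replaced by $\lambda V$ for any $\lambda\in[0,1]$.
   Context: Let $\mathbb{T}=\mathbb{R}/\mathbb{Z}$ be the one-dimensional torus; functions on $\mathbb{T}$ are identified with $1$-periodic functions on $\mathbb{R}$. Let $H:\mathbb{R}\to\mathbb{R}$ be of class $C^2$, $V:\mathbb{T}\to\mathbb{R}$ continuous, $\alpha>0$, and $0<\epsilon\le 1$. We say $(u,m)$ solves Problem 1 if $u,m\in C^2(\mathbb{T})$, $m>0$ on $\mathbb{T}$, and on $\mathbb{T}$: $$u-u_{xx}+H(u_x)+V(x)=m^\alpha+\epsilon(m-m_{xx}),\qquad m-m_{xx}-(H'(u_x)m)_x=1-\epsilon(u-u_{xx}).$$ Assumptions: (A1) there exist constants $C_1,C_2,C_3>0$ and $\gamma>1$ such that $-C_1+C_2|p|^\gamma\le H(p)\le C_1+C_3|p|^\gamma$ for all $p\in\mathbb{R}$. (A2) There exist constants $\tilde C_1,\tilde C_2,\tilde C_3>0$ such that $-\tilde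 C_1+\tilde C_2|p|^\gamma\le pH'(p)-H(p)\le \tilde C_1+\tilde C_3|p|^\gamma$ for all $p$ (same $\gamma$ as in (A1)). (A3) $V$ is of class $C^2$. (A4) $H$ is convex. *)

From Stdlib Require Export Reals Lra.
Open Scope R_scope.

(* |p|^g with the convention 0^g = 0 (g > 0); Stdlib's Rpower 0 g = 1. *)
Definition absPow (p g : R) : R :=
  if Req_EM_T p 0 then 0 else Rpower (Rabs p) g.

(* 1-periodic function on R, i.e. a function on T = R/Z. *)
Definition periodic1 (f : R -> R) : Prop := forall x, f (x + 1) = f x.

Definition C2_with (f f1 f2 : R -> R) : Prop :=
  (forall x, derivable_pt_lim f x (f1 x)) /\
  (forall x, derivable_pt_lim f1 x (f2 x)) /\
  continuity f2.

Definition distT (x y : R) : R :=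
  Rmin (frac_part (x - y)) (1 - frac_part (x - y)).

(* The divergence term (H'(u_x) m)_x is expressed by
   requiring x |-> H1 (u1 x) * m x to have the prescribed derivative. *)
Definition Problem1 (H H1 W : R -> R) (alpha eps : R)
  (u u1 u2 m m1 m2 : R -> R) : Prop :=
  periodic1 u /\ periodic1 m /\
  C2_with u u1 u2 /\ C2_with m m1 m2 /\
  (forall x, 0 < m x) /\
  (forall x, u x - u2 x + H (u1 x) + W x
             = Rpower (m x) alpha + eps * (m x - m2 x)) /\
  (forall x, derivable_pt_lim (fun y => H1 (u1 y) * m y) x
             (m x - m2 x - 1 + eps * (u x - u2 x))).

(** Combining the first equation, multiplied by [1 - (m - m_xx)], with the second
    one, its divergence expanded by the chain rule and multiplied by [u_xx], gives
      [eps (u² + 2u_x² + u_xx² + m² + 2m_x² + m_xx²) = G' + R]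
    for an explicit 1-periodic flux [G].  Because [H'' >= 0] (convexity), [m > 0],
    [H >= -C1], [pH'(p) - H(p) >= -D1] and [|V|, |V_xx| <= B], the remainder [R]
    is bounded above by a constant [c] independent of [eps] and of the solution,
    so integrating over a period gives [eps (|u|²_H² + |m|²_H²) <= c].  The
    one-dimensional embedding [H¹(T) ⊂ C^{1/2}(T)], in the elementary form
    [|w(x) - w(y)| <= sqrt 2 |w'|_L² sqrt(dist(x, y))] (Cauchy-Schwarz) and
    [|w| <= |w|_L² + |w'|_L²] (mean value theorem), then bounds [u, u_x, m, m_x]
    by [2 sqrt(c / eps)].  Only the lower halves of (A1) and (A2) are used. *)

From Stdlib Require Import Reals Lra Lia ZArith.
From Coquelicot Require Import Coquelicot.
Open Scope R_scope.

Lemma derivable_pt_lim_eq (f : R -> R) (x l l' : R) :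
  derivable_pt_lim f x l -> l = l' -> derivable_pt_lim f x l'.
Proof. intros Hf <-; exact Hf. Qed.

Ltac derive_rules :=
  repeat first
    [ match goal with
      | Hf : forall x, derivable_pt_lim ?f x _ |- derivable_pt_lim ?f _ _ => apply Hf
      end
    | apply derivable_pt_lim_minus | apply derivable_pt_lim_plus
    | apply derivable_pt_lim_mult | apply derivable_pt_lim_const
    | apply derivable_pt_lim_id ].

Ltac derive_with_ring :=
  eapply derivable_pt_lim_eq; [derive_rules | cbv beta; ring].

Lemma antiderivative_exists (g : R -> R) :
  continuity g -> exists G : R -> R, forall x, derivable_pt_lim G x (g x).
Proof.
intros Hg. exists (fun x => RInt g 0 x). intros x.
apply is_derive_Reals, (is_derive_RInt g (RInt g 0) 0 x).
- apply filter_forall. intros b. apply (RInt_correct g 0 b), ex_RInt_continuous.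
  intros z _. apply continuity_pt_filterlim, Hg.
- apply continuity_pt_filterlim, Hg.
Qed.

Lemma continuity_sqr (f : R -> R) : continuity f -> continuity (fun x => f x ^ 2).
Proof.
intros Hf x. apply continuity_pt_mult; [apply Hf|].
apply continuity_pt_mult; [apply Hf | apply continuity_pt_const; intros ? ?; reflexivity].
Qed.

Lemma derivable_continuity (f f' : R -> R) :
  (forall x, derivable_pt_lim f x (f' x)) -> continuity f.
Proof. intros Hf x. apply (derivable_continuous_pt f x (exist _ (f' x) (Hf x))). Qed.

Lemma increment_le (F G F' G' : R -> R) (a b : R) : a <= b ->
  (forall x, derivable_pt_lim F x (F' x)) -> (forall x, derivable_pt_lim G x (G' x)) ->
  (forall x, a <= x <= b -> F' x <= G' x) -> F b - F a <= G b - G a.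
Proof.
intros Hab HF HG Hle. destruct (Req_dec a b) as [<-|Hne]; [lra|].
destruct (MVT_cor2 (fun y => G y - F y) (fun y => G' y - F' y) a b)
  as [c [Hc Hac]]; [lra | intros c _; apply derivable_pt_lim_minus; auto |].
assert (F' c <= G' c) by (apply Hle; lra). nra.
Qed.

Lemma increment_nonneg (F F' : R -> R) (a b : R) : a <= b ->
  (forall x, derivable_pt_lim F x (F' x)) -> (forall x, a <= x <= b -> 0 <= F' x) ->
  0 <= F b - F a.
Proof.
intros Hab HF Hpos.
assert (Hinc := increment_le (fun _ => 0) F (fun _ => 0) F' a b Hab).
cbv beta in Hinc. enough (0 - 0 <= F b - F a) by lra.
apply Hinc; auto. intros; apply derivable_pt_lim_const.
Qed.

Lemma derivative_zero_constant (f : R -> R) :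
  (forall x, derivable_pt_lim f x 0) -> forall x y, f x = f y.
Proof.
intros Hf.
assert (Hle : forall x y, x <= y -> f y - f x <= 0 /\ 0 <= f y - f x).
{ intros x y Hxy. split.
  - assert (Hinc := increment_le f (fun _ => 0) (fun _ => 0) (fun _ => 0) x y Hxy Hf).
    cbv beta in Hinc. enough (f y - f x <= 0 - 0) by lra.
    apply Hinc; [intros; apply derivable_pt_lim_const | intros; lra].
  - apply (increment_nonneg f (fun _ => 0)); [exact Hxy | exact Hf | intros; lra]. }
intros x y. destruct (Rle_dec x y) as [Hxy|Hxy].
- destruct (Hle x y Hxy). lra.
- destruct (Hle y x ltac:(lra)). lra.
Qed.

Lemma derivable_pt_lim_shift (f : R -> R) (c x l : R) :
  derivable_pt_lim f (x + c) l -> derivable_pt_lim (fun y => f (y + c)) x l.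
Proof.
intros Hf. eapply derivable_pt_lim_eq.
- apply (derivable_pt_lim_comp (fun y => y + c) f x 1 l); [|exact Hf].
  derive_with_ring.
- ring.
Qed.

Lemma periodic1_derive (f f' : R -> R) :
  periodic1 f -> (forall x, derivable_pt_lim f x (f' x)) -> periodic1 f'.
Proof.
intros Hp Hd x.
apply (uniqueness_limite (fun y => f (y + 1)) x).
- apply derivable_pt_lim_shift, Hd.
- apply is_derive_Reals, (is_derive_ext f); [intros t; symmetry; apply Hp|].
  apply is_derive_Reals, Hd.
Qed.

Lemma periodic1_Z (f : R -> R) : periodic1 f -> forall n x, f (x + IZR n) = f x.
Proof.
intros Hp.
assert (Hnat : forall k x, f (x + INR k) = f x).
{ induction k as [|k IH]; intros x; [simpl; f_equal; ring|].
  rewrite S_INR. replace (x + (INR k + 1)) with (x + INR k + 1) by ring.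
  rewrite Hp. apply IH. }
intros n x. destruct (Z_le_gt_dec 0 n) as [Hn|Hn].
- rewrite <- (Z2Nat.id n Hn), <- INR_IZR_INZ. apply Hnat.
- assert (E : IZR n = - INR (Z.to_nat (- n))).
  { rewrite INR_IZR_INZ, Z2Nat.id by lia. rewrite opp_IZR. ring. }
  rewrite E, <- (Hnat (Z.to_nat (- n)) (x + - _)). f_equal. ring.
Qed.

Lemma periodic1_primitive_increment (Q q : R -> R) :
  periodic1 q -> (forall x, derivable_pt_lim Q x (q x)) ->
  forall x, Q (x + 1) - Q x = Q 1 - Q 0.
Proof.
intros Hq HQ x. replace (Q 1) with (Q (0 + 1)) by (f_equal; ring).
apply (derivative_zero_constant (fun y => Q (y + 1) - Q y)). intros y.
eapply derivable_pt_lim_eq.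
- apply derivable_pt_lim_minus; [apply derivable_pt_lim_shift|]; apply HQ.
- rewrite Hq. ring.
Qed.

Lemma distT_le_half (x y : R) : distT x y <= 1 / 2.
Proof.
unfold distT.
pose proof (Rmin_l (frac_part (x - y)) (1 - frac_part (x - y))).
pose proof (Rmin_r (frac_part (x - y)) (1 - frac_part (x - y))). lra.
Qed.

Lemma periodic1_holder_distT (w : R -> R) (r : R) : periodic1 w ->
  (forall a b, 0 <= a -> a <= b -> b <= 2 -> Rabs (w b - w a) <= r * sqrt (b - a)) ->
  forall x y, Rabs (w x - w y) <= r * sqrt (distT x y).
Proof.
intros Hp Hseg x y. unfold distT.
set (f := frac_part (x - y)). set (a := frac_part y).
destruct (base_fp (x - y)) as [Hf0 Hf1]. destruct (base_fp y) as [Ha0 Ha1].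
fold f in Hf0, Hf1. fold a in Ha0, Ha1.
assert (Hwx : w x = w (a + f)).
{ assert (Ex : x = a + f + IZR (Int_part y + Int_part (x - y))).
  { rewrite plus_IZR. unfold a, f, frac_part. ring. }
  rewrite Ex. apply periodic1_Z, Hp. }
assert (Hwy : w y = w a).
{ assert (Ey : y = a + IZR (Int_part y)) by (unfold a, frac_part; ring).
  rewrite Ey at 1. apply periodic1_Z, Hp. }
rewrite Hwx, Hwy. destruct (Rle_dec f (1 - f)).
- rewrite Rmin_left by lra. replace f with (a + f - a) at 2 by ring.
  apply Hseg; lra.
- rewrite Rmin_right by lra. rewrite <- (Hp a), Rabs_minus_sym.
  replace (1 - f) with (a + 1 - (a + f)) by ring. apply Hseg; lra.
Qed.

Lemma increment_le_amgm (w w' Q : R -> R) (a b t : R) : a <= b -> 0 < t ->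
  (forall x, derivable_pt_lim w x (w' x)) -> (forall x, derivable_pt_lim Q x (w' x ^ 2)) ->
  w b - w a <= (Q b - Q a) / (2 * t) + t * (b - a) / 2.
Proof.
intros Hab Ht Hw HQ.
assert (Hinc := increment_le w (fun y => Q y / (2 * t) + t * y / 2)
  w' (fun y => w' y ^ 2 / (2 * t) + t / 2) a b Hab Hw).
cbv beta in Hinc.
replace ((Q b - Q a) / (2 * t) + t * (b - a) / 2)
  with (Q b / (2 * t) + t * b / 2 - (Q a / (2 * t) + t * a / 2)) by (field; lra).
apply Hinc.
- intros x. unfold Rdiv. derive_with_ring.
- intros x _.
  assert (0 <= (w' x - t) ^ 2 / (2 * t))
    by (apply Rdiv_le_0_compat; [apply pow2_ge_0 | lra]).
  replace (w' x ^ 2 / (2 * t) + t / 2) with (w' x + (w' x - t) ^ 2 / (2 * t))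
    by (field; lra).
  lra.
Qed.

Lemma cauchy_schwarz_increment (w w' Q : R -> R) (a b S : R) : a <= b -> 0 < S ->
  (forall x, derivable_pt_lim w x (w' x)) -> (forall x, derivable_pt_lim Q x (w' x ^ 2)) ->
  Q b - Q a <= S -> Rabs (w b - w a) <= sqrt S * sqrt (b - a).
Proof.
intros Hab HS Hw HQ HQS.
destruct (Req_dec a b) as [<-|Hne].
{ rewrite !Rminus_diag, Rabs_R0, sqrt_0. lra. }
set (s := sqrt S). set (d := sqrt (b - a)).
assert (Hs : 0 < s) by (apply sqrt_lt_R0; lra).
assert (Hd : 0 < d) by (apply sqrt_lt_R0; lra).
assert (Es : s * s = S) by (apply sqrt_sqrt; lra).
assert (Ed : d * d = b - a) by (apply sqrt_sqrt; lra).
assert (Hsd : 0 < s / d) by (apply Rdiv_lt_0_compat; lra).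
(* The AM-GM bound with the optimal weight [t = sqrt S / sqrt (b - a)]. *)
assert (Hopt : S / (2 * (s / d)) + s / d * (b - a) / 2 = s * d)
  by (rewrite <- Es, <- Ed; field; lra).
assert (Hdiv : (Q b - Q a) / (2 * (s / d)) <= S / (2 * (s / d)))
  by (apply Rmult_le_compat_r; [left; apply Rinv_0_lt_compat|]; lra).
assert (Hup := increment_le_amgm w w' Q a b (s / d) Hab Hsd Hw HQ).
assert (Hdown := increment_le_amgm (fun y => - w y) (fun y => - w' y) Q a b (s / d) Hab Hsd).
cbv beta in Hdown.
assert (- w b - - w a <= (Q b - Q a) / (2 * (s / d)) + s / d * (b - a) / 2).
{ apply Hdown.
  - intros x. apply derivable_pt_lim_opp, Hw.
  - intros x. eapply derivable_pt_lim_eq; [apply HQ | ring]. }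
apply Rabs_le. lra.
Qed.

Lemma periodic1_holder_of_L2 (w w' Q : R -> R) (A : R) : periodic1 w -> 0 < A ->
  (forall x, derivable_pt_lim w x (w' x)) -> (forall x, derivable_pt_lim Q x (w' x ^ 2)) ->
  Q 1 - Q 0 <= A -> forall x y, Rabs (w x - w y) <= sqrt (2 * A) * sqrt (distT x y).
Proof.
intros Hp HA Hw HQ HQA.
assert (Hw'p := periodic1_derive w w' Hp Hw).
assert (HQ2 : Q 2 - Q 1 = Q 1 - Q 0).
{ replace 2 with (1 + 1) by ring.
  apply (periodic1_primitive_increment Q (fun y => w' y ^ 2)); auto.
  intros x; rewrite Hw'p; reflexivity. }
apply periodic1_holder_distT; [exact Hp|].
intros a b Ha Hab Hb. apply (cauchy_schwarz_increment w w' Q); auto; [lra|].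
assert (Hmono : forall s t, s <= t -> 0 <= Q t - Q s)
  by (intros s t Hst; apply (increment_nonneg Q (fun y => w' y ^ 2)); auto;
      intros; apply pow2_ge_0).
pose proof (Hmono 0 a Ha). pose proof (Hmono b 2 Hb). lra.
Qed.

Lemma periodic1_sup_of_L2 (w P : R -> R) (A : R) : 0 <= A ->
  (forall x, derivable_pt_lim P x (w x ^ 2)) -> P 1 - P 0 <= A ->
  (forall x y, Rabs (w x - w y) <= sqrt (2 * A) * sqrt (distT x y)) ->
  forall x, Rabs (w x) <= 2 * sqrt A.
Proof.
intros HA HP HPA Hhol x.
destruct (MVT_cor2 P (fun y => w y ^ 2) 0 1) as [c [Hc _]]; [lra | intros; apply HP |].
assert (Hwc : Rabs (w c) <= sqrt A).
{ rewrite <- sqrt_Rsqr_abs. apply sqrt_le_1_alt. unfold Rsqr. nra. }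
assert (Hfar : sqrt (2 * A) * sqrt (distT x c) <= sqrt A).
{ rewrite <- sqrt_mult_alt by lra. apply sqrt_le_1_alt.
  pose proof (distT_le_half x c). nra. }
pose proof (Hhol x c). pose proof (Rabs_triang (w x - w c) (w c)).
replace (w x - w c + w c) with (w x) in * by ring. lra.
Qed.

Lemma periodic1_sobolev_bound (w w' E F : R -> R) (A : R) : periodic1 w -> 0 < A ->
  (forall x, derivable_pt_lim w x (w' x)) -> continuity w' ->
  (forall x, derivable_pt_lim F x (E x)) -> F 1 - F 0 <= A ->
  (forall x, w x ^ 2 <= E x) -> (forall x, w' x ^ 2 <= E x) ->
  (forall x, Rabs (w x) <= 2 * sqrt A) /\
  (forall x y, Rabs (w x - w y) <= 2 * sqrt A * sqrt (distT x y)).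
Proof.
intros Hp HA Hw Hw'c HF HFA HwE Hw'E.
destruct (antiderivative_exists _ (continuity_sqr w (derivable_continuity w w' Hw)))
  as [P HP].
destruct (antiderivative_exists _ (continuity_sqr w' Hw'c)) as [Q HQ].
assert (HPA : P 1 - P 0 <= A)
  by (eapply Rle_trans; [apply (increment_le P F (fun y => w y ^ 2) E); auto; lra | exact HFA]).
assert (HQA : Q 1 - Q 0 <= A)
  by (eapply Rle_trans; [apply (increment_le Q F (fun y => w' y ^ 2) E); auto; lra | exact HFA]).
assert (Hhol := periodic1_holder_of_L2 w w' Q A Hp HA Hw HQ HQA).
split; [apply (periodic1_sup_of_L2 w P); auto; lra|].
assert (Hr : sqrt (2 * A) <= 2 * sqrt A).
{ rewrite sqrt_mult_alt by lra.
  assert (sqrt 2 * sqrt 2 = 2) by (apply sqrt_sqrt; lra).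
  pose proof (sqrt_pos 2). pose proof (sqrt_pos A). nra. }
intros x y. eapply Rle_trans; [apply Hhol|].
apply Rmult_le_compat_r; [apply sqrt_pos | exact Hr].
Qed.

Lemma convex_second_derivative_nonneg (H H1 H2 : R -> R) :
  (forall p, derivable_pt_lim H p (H1 p)) -> (forall p, derivable_pt_lim H1 p (H2 p)) ->
  continuity H2 ->
  (forall x y t, 0 <= t <= 1 -> H (t * x + (1 - t) * y) <= t * H x + (1 - t) * H y) ->
  forall p, 0 <= H2 p.
Proof.
intros HH HH1 Hc Hconv p.
destruct (Rle_dec 0 (H2 p)) as [|Hneg]; [assumption | exfalso].
destruct (Hc p (- H2 p / 2) ltac:(lra)) as [delta [Hdelta Hnear]].
assert (Hnbhd : forall z, Rabs (z - p) < delta -> H2 z < 0).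
{ intros z Hz. destruct (Req_dec z p) as [->|Hzp]; [lra|].
  assert (Hd : R_dist (H2 z) (H2 p) < - H2 p / 2)
    by (apply Hnear; repeat split; auto).
  unfold R_dist in Hd. apply Rabs_def2 in Hd. lra. }
(* [g s = H (p + s) + H (p - s) - 2 H p] is nonnegative by convexity, but
   [g 0 = g' 0 = 0] and [g'' < 0] near [0]. *)
set (g := fun s => H (p + s) + H (p - s) - 2 * H p).
set (g1 := fun s => H1 (p + s) - H1 (p - s)).
assert (Dg : forall s, derivable_pt_lim g s (g1 s)).
{ intros s. unfold g, g1. eapply derivable_pt_lim_eq.
  - apply derivable_pt_lim_minus; [apply derivable_pt_lim_plus | apply derivable_pt_lim_const];
      apply (derivable_pt_lim_comp _ H); [| apply HH | | apply HH]; derive_rules.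
  - ring. }
assert (Dg1 : forall s, derivable_pt_lim g1 s (H2 (p + s) + H2 (p - s))).
{ intros s. unfold g1. eapply derivable_pt_lim_eq.
  - apply derivable_pt_lim_minus; apply (derivable_pt_lim_comp _ H1);
      [| apply HH1 | |apply HH1]; derive_rules.
  - ring. }
set (h := delta / 2).
destruct (MVT_cor2 g g1 0 h ltac:(unfold h; lra) (fun c _ => Dg c)) as [c [Ec Hc0]].
destruct (MVT_cor2 g1 _ 0 c ltac:(lra) (fun c _ => Dg1 c)) as [c' [Ec' Hc0']].
assert (H2 (p + c') + H2 (p - c') < 0).
{ assert (Hr : Rabs (p + c' - p) < delta) by (rewrite Rabs_right; unfold h in *; lra).
  assert (Hl : Rabs (p - c' - p) < delta) by (rewrite Rabs_left; unfold h in *; lra).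
  pose proof (Hnbhd _ Hr). pose proof (Hnbhd _ Hl). lra. }
assert (g1 0 = 0) by (unfold g1; rewrite Rplus_0_r, Rminus_0_r; ring).
assert (g 0 = 0) by (unfold g; rewrite Rplus_0_r, Rminus_0_r; ring).
assert (g1 c < 0) by nra.
assert (Hgh : g h < 0) by nra.
assert (Hmid := Hconv (p + h) (p - h) (1 / 2) ltac:(lra)).
replace (1 / 2 * (p + h) + (1 - 1 / 2) * (p - h)) with p in Hmid by field.
unfold g in Hgh. lra.
Qed.

Lemma power_growth_bound (alpha K : R) : 0 < alpha -> 0 <= K ->
  exists c, forall z, 0 < z -> K * z + Rpower z alpha - Rpower z alpha * z <= c.
Proof.
intros Ha HK.
set (M := Rmax 2 (Rpower (2 * K + 1) (1 / alpha))).
exists (K * M + Rpower M alpha). intros z Hz.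
assert (HM2 : 2 <= M) by apply Rmax_l.
assert (HMp : Rpower (2 * K + 1) (1 / alpha) <= M) by apply Rmax_r.
assert (0 < Rpower M alpha) by apply exp_pos.
assert (0 < Rpower z alpha) by apply exp_pos.
destruct (Rle_dec z M) as [Hle|Hgt].
- assert (Rpower z alpha <= Rpower M alpha) by (apply Rle_Rpower_l; lra).
  assert (K * z <= K * M) by (apply Rmult_le_compat_l; lra).
  nra.
- assert (2 * K + 1 <= Rpower z alpha).
  { replace (2 * K + 1) with (Rpower (Rpower (2 * K + 1) (1 / alpha)) alpha).
    - apply Rle_Rpower_l; [lra | split; [apply exp_pos | lra]].
    - rewrite Rpower_mult. replace (1 / alpha * alpha) with 1 by (field; lra).
      apply Rpower_1. lra. }
  nra.
Qed.

Lemma absPow_nonneg (p g : R) : 0 <= absPow p g.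
Proof. unfold absPow. destruct (Req_EM_T p 0); [lra | left; apply exp_pos]. Qed.

Section EnergyEstimate.

Variables (H H1 H2 W W1 W2 : R -> R) (alpha eps C1 D1 B c0 : R).
Variables (u u1 u2 m m1 m2 : R -> R).

Hypothesis H_deriv : forall p, derivable_pt_lim H p (H1 p).
Hypothesis H1_deriv : forall p, derivable_pt_lim H1 p (H2 p).
Hypothesis H2_nonneg : forall p, 0 <= H2 p.
Hypothesis H_lower : forall p, - C1 <= H p.
Hypothesis legendre_lower : forall p, - D1 <= p * H1 p - H p.
Hypothesis W_periodic : periodic1 W.
Hypothesis W_deriv : forall x, derivable_pt_lim W x (W1 x).
Hypothesis W1_deriv : forall x, derivable_pt_lim W1 x (W2 x).
Hypothesis W_bound : forall x, Rabs (W x) <= B.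
Hypothesis W2_bound : forall x, Rabs (W2 x) <= B.
Hypothesis alpha_nonneg : 0 <= alpha.
Hypothesis eps_le_1 : eps <= 1.
Hypothesis c0_bound :
  forall z, 0 < z -> (D1 + 2 * B + 1) * z + Rpower z alpha - Rpower z alpha * z <= c0.

Hypothesis u_periodic : periodic1 u.
Hypothesis m_periodic : periodic1 m.
Hypothesis u_deriv : forall x, derivable_pt_lim u x (u1 x).
Hypothesis u1_deriv : forall x, derivable_pt_lim u1 x (u2 x).
Hypothesis m_deriv : forall x, derivable_pt_lim m x (m1 x).
Hypothesis m1_deriv : forall x, derivable_pt_lim m1 x (m2 x).
Hypothesis m_pos : forall x, 0 < m x.
Hypothesis first_equation : forall x,
  u x - u2 x + H (u1 x) + W x = Rpower (m x) alpha + eps * (m x - m2 x).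
Hypothesis second_equation : forall x,
  derivable_pt_lim (fun y => H1 (u1 y) * m y) x (m x - m2 x - 1 + eps * (u x - u2 x)).

Definition energy_density (x : R) : R :=
  u x ^ 2 + 2 * u1 x ^ 2 + u2 x ^ 2 + m x ^ 2 + 2 * m1 x ^ 2 + m2 x ^ 2.

Definition energy_flux (x : R) : R :=
  H1 (u1 x) * m x * u x - H (u1 x) * m1 x + W1 x * m x - W x * m1 x - eps * m1 x
  + Rpower (m x) alpha * m1 x + 2 * eps * (u x * u1 x + m x * m1 x).

Definition energy_remainder (x : R) : R :=
  m x * (H (u1 x) - u1 x * H1 (u1 x)) - H2 (u1 x) * u2 x ^ 2 * m x
  + (W x - W2 x) * m x + Rpower (m x) alpha + eps * m x - H (u1 x) - W x
  - Rpower (m x) alpha * m x - alpha * Rpower (m x) (alpha - 1) * m1 x ^ 2.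

Lemma second_equation_expanded (x : R) :
  H2 (u1 x) * u2 x * m x + H1 (u1 x) * m1 x = m x - m2 x - 1 + eps * (u x - u2 x).
Proof.
apply (uniqueness_limite (fun y => H1 (u1 y) * m y) x); [|apply second_equation].
eapply derivable_pt_lim_eq.
- apply derivable_pt_lim_mult; [apply (derivable_pt_lim_comp u1 H1) | ]; auto.
- cbv beta. ring.
Qed.

Lemma energy_flux_periodic : energy_flux 1 = energy_flux 0.
Proof.
assert (u1_periodic := periodic1_derive u u1 u_periodic u_deriv).
assert (m1_periodic := periodic1_derive m m1 m_periodic m_deriv).
assert (W1_periodic := periodic1_derive W W1 W_periodic W_deriv).
unfold energy_flux. replace 1 with (0 + 1) by ring.
rewrite u_periodic, u1_periodic, m_periodic, m1_periodic, W_periodic, W1_periodic.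
reflexivity.
Qed.

Lemma energy_flux_derivative (x : R) :
  derivable_pt_lim energy_flux x (eps * energy_density x - energy_remainder x).
Proof.
assert (Hpow : forall y, derivable_pt_lim (fun z => Rpower (m z) alpha) y
                 (alpha * Rpower (m y) (alpha - 1) * m1 y)).
{ intros y. eapply derivable_pt_lim_eq.
  - apply (derivable_pt_lim_comp m (fun z => Rpower z alpha)); [apply m_deriv|].
    apply derivable_pt_lim_power, m_pos.
  - ring. }
assert (HHu : forall y, derivable_pt_lim (fun z => H (u1 z)) y (H1 (u1 y) * u2 y))
  by (intros y; apply (derivable_pt_lim_comp u1 H); auto).
eapply derivable_pt_lim_eq; [unfold energy_flux; derive_rules|].
(* Subtract [1 - (m - m_xx)] times the first equation and [u_xx] times the expanded second one. *)
assert (Hid := first_equation x). assert (Hexp := second_equation_expanded x).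
transitivity (eps * energy_density x - energy_remainder x
  - (1 - (m x - m2 x)) * (u x - u2 x + H (u1 x) + W x - Rpower (m x) alpha
                            - eps * (m x - m2 x))
  - u2 x * (H2 (u1 x) * u2 x * m x + H1 (u1 x) * m1 x
            - (m x - m2 x - 1 + eps * (u x - u2 x)))).
- unfold energy_density, energy_remainder. ring.
- rewrite Hid, Hexp. ring.
Qed.

Lemma energy_remainder_le (x : R) : energy_remainder x <= c0 + C1 + B.
Proof.
unfold energy_remainder. pose proof (m_pos x) as Hm.
pose proof (proj1 (Rabs_le_between _ _) (W_bound x)).
pose proof (proj1 (Rabs_le_between _ _) (W2_bound x)).
assert (Hlegendre : m x * (H (u1 x) - u1 x * H1 (u1 x)) <= m x * D1)
  by (apply Rmult_le_compat_l; [lra | pose proof (legendre_lower (u1 x)); lra]).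
assert (Hconvex : 0 <= H2 (u1 x) * u2 x ^ 2 * m x).
{ apply Rmult_le_pos; [apply Rmult_le_pos; [apply H2_nonneg | apply pow2_ge_0] | lra]. }
assert (HW : (W x - W2 x) * m x <= 2 * B * m x) by (apply Rmult_le_compat_r; lra).
assert (Hmonotone : 0 <= alpha * Rpower (m x) (alpha - 1) * m1 x ^ 2).
{ apply Rmult_le_pos; [apply Rmult_le_pos; [lra | left; apply exp_pos] | apply pow2_ge_0]. }
pose proof (H_lower (u1 x)). pose proof (c0_bound (m x) Hm).
assert (eps * m x <= m x) by nra.
lra.
Qed.

Lemma energy_bound (F : R -> R) : (forall x, derivable_pt_lim F x (energy_density x)) ->
  eps * (F 1 - F 0) <= c0 + C1 + B.
Proof.
intros HF.
assert (Hinc := increment_le (fun y => eps * F y)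
  (fun y => energy_flux y + (c0 + C1 + B) * y)
  (fun y => eps * energy_density y)
  (fun y => eps * energy_density y - energy_remainder y + (c0 + C1 + B)) 0 1).
cbv beta in Hinc.
assert (Hflux := energy_flux_periodic).
enough (eps * F 1 - eps * F 0
        <= energy_flux 1 + (c0 + C1 + B) * 1 - (energy_flux 0 + (c0 + C1 + B) * 0)) by lra.
apply Hinc; [lra | | | ].
- intros x. derive_with_ring.
- intros x. eapply derivable_pt_lim_eq.
  + apply derivable_pt_lim_plus; [apply energy_flux_derivative|].
    apply derivable_pt_lim_mult; [apply derivable_pt_lim_const | apply derivable_pt_lim_id].
  + cbv beta. ring.
- intros x _. pose proof (energy_remainder_le x). lra.
Qed.

End EnergyEstimate.

Lemma continuity_energy_density (u u1 u2 m m1 m2 : R -> R) :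
  C2_with u u1 u2 -> C2_with m m1 m2 -> continuity (energy_density u u1 u2 m m1 m2).
Proof.
intros [Hu [Hu1 Hu2]] [Hm [Hm1 Hm2]]. unfold energy_density.
repeat first [ apply continuity_plus | apply continuity_sqr | apply continuity_mult
             | apply continuity_const; intros ? ?; reflexivity ];
  eauto using derivable_continuity.
Qed.

Lemma solution_component_bounds (u u1 u2 m m1 m2 F : R -> R) (A : R) :
  periodic1 u -> periodic1 m -> C2_with u u1 u2 -> C2_with m m1 m2 -> 0 < A ->
  (forall x, derivable_pt_lim F x (energy_density u u1 u2 m m1 m2 x)) -> F 1 - F 0 <= A ->
  forall w, (w = u \/ w = u1 \/ w = m \/ w = m1) ->
  (forall x, Rabs (w x) <= 2 * sqrt A) /\
  (forall x y, Rabs (w x - w y) <= 2 * sqrt A * sqrt (distT x y)).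
Proof.
intros Hu_per Hm_per [Hu [Hu1 Hu2]] [Hm [Hm1 Hm2]] HA HF HFA w Hw.
assert (Hsq : forall x, 0 <= u x ^ 2 /\ 0 <= u1 x ^ 2 /\ 0 <= u2 x ^ 2 /\
                        0 <= m x ^ 2 /\ 0 <= m1 x ^ 2 /\ 0 <= m2 x ^ 2)
  by (intros; repeat split; apply pow2_ge_0).
destruct Hw as [ -> | [ -> | [ -> | -> ] ] ];
  eapply periodic1_sobolev_bound; eauto using periodic1_derive, derivable_continuity;
  intros x; unfold energy_density; destruct (Hsq x) as (? & ? & ? & ? & ? & ?); lra.
Qed.

Lemma Rabs_scale_le (lambda z B : R) : 0 <= lambda <= 1 -> Rabs z <= B -> Rabs (lambda * z) <= B.
Proof.
intros Hl Hz. rewrite Rabs_mult, (Rabs_pos_eq lambda) by lra.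
pose proof (Rabs_pos z). nra.
Qed.

Theorem mainTheorem6 :
  forall (alpha gamma C1 C2 C3 D1 D2 D3 B : R),
    0 < alpha -> 1 < gamma ->
    0 < C1 -> 0 < C2 -> 0 < C3 -> 0 < D1 -> 0 < D2 -> 0 < D3 ->
    0 <= B ->
  exists C : R, 0 < C /\
  forall (H H1 H2 V V1 V2 : R -> R),
    C2_with H H1 H2 ->
    (forall p, - C1 + C2 * absPow p gamma <= H p <= C1 + C3 * absPow p gamma) ->
    (forall p, - D1 + D2 * absPow p gamma <= p * H1 p - H p
               <= D1 + D3 * absPow p gamma) ->
    periodic1 V -> C2_with V V1 V2 ->
    (forall x, Rabs (V x) <= B) -> (forall x, Rabs (V1 x) <= B) ->
    (forall x, Rabs (V2 x) <= B) ->
    (forall x y t, 0 <= t <= 1 ->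
       H (t * x + (1 - t) * y) <= t * H x + (1 - t) * H y) ->
  forall (eps lambda : R), 0 < eps <= 1 -> 0 <= lambda <= 1 ->
  forall (u u1 u2 m m1 m2 : R -> R),
    Problem1 H H1 (fun x => lambda * V x) alpha eps u u1 u2 m m1 m2 ->
    forall w, (w = u \/ w = u1 \/ w = m \/ w = m1) ->
      (forall x, Rabs (w x) <= C / sqrt eps) /\
      (forall x y, Rabs (w x - w y) <= C / sqrt eps * sqrt (distT x y)).
Proof.
intros alpha gamma C1 C2 C3 D1 D2 D3 B Ha _ HC1 HC2 _ HD1 HD2 _ HB.
destruct (power_growth_bound alpha (D1 + 2 * B + 1) Ha ltac:(lra)) as [c0 Hc0].
set (c := c0 + C1 + B).
assert (Hc : 0 < c) by (pose proof (Hc0 1 ltac:(lra)); unfold c; lra).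
exists (2 * sqrt c). split; [pose proof (sqrt_lt_R0 c Hc); lra|].
intros H H1 H2 V V1 V2 [HH [HH1 HH2]] A1 A2 HV_per [HV [HV1 _]] HV_bound _ HV2_bound Hconv
  eps lambda Heps Hlam u u1 u2 m m1 m2 Hprob.
destruct Hprob as (Hu_per & Hm_per & Hu & Hm & Hm_pos & Eq1 & Eq2).
destruct (antiderivative_exists _ (continuity_energy_density u u1 u2 m m1 m2 Hu Hm))
  as [F HF].
assert (HFc : eps * (F 1 - F 0) <= c).
{ destruct Hu as [Hu [Hu1 _]]. destruct Hm as [Hm [Hm1 _]].
  apply (energy_bound H H1 H2 (fun x => lambda * V x) (fun x => lambda * V1 x)
    (fun x => lambda * V2 x) alpha eps C1 D1 B c0 u u1 u2 m m1 m2); auto; try lra.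
  - apply (convex_second_derivative_nonneg H H1); auto.
  - intros p. pose proof (A1 p). pose proof (absPow_nonneg p gamma). nra.
  - intros p. pose proof (A2 p). pose proof (absPow_nonneg p gamma). nra.
  - intros x. cbv beta. rewrite HV_per. reflexivity.
  - intros x. derive_with_ring.
  - intros x. derive_with_ring.
  - intros x. apply Rabs_scale_le; auto.
  - intros x. apply Rabs_scale_le; auto. }
replace (2 * sqrt c / sqrt eps) with (2 * sqrt (c / eps))
  by (rewrite sqrt_div_alt by lra; field; apply Rgt_not_eq, sqrt_lt_R0; lra).
apply (solution_component_bounds u u1 u2 m m1 m2 F); auto.
- apply Rdiv_lt_0_compat; lra.
- apply (Rmult_le_reg_l eps); [lra|]. field_simplify; lra.
Qed.
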